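(* Let $N,n\in\mathbb{N}$ and let $\{\mathcal{G}_i\}_{i=1}^n$ be a set of directed regular graphs without loops on the same set of $N$ vertices. Then there exists a directed graph $\mathcal{G}$ such that $\operatorname{Aut}\mathcal{G}=\bigcap_{i=1}^n\operatorname{Aut}\mathcal{G}_i$.
   Context: A directed graph is regular if every vertex has the same in-degree and out-degree $d$ (i.e. $A\mathbf{1}=A^T\mathbf{1}=d\mathbf{1}$ for the adjacency matrix $A$). The intersection is taken inside the permutation group of the common vertex set; the equality is understood via the natural injective embedding of $\bigcap_i\operatorname{Aut}\mathcal{G}_i$ into $\operatorname{Aut}\mathcal{G}$ (as groups, $\operatorname{Aut}\mathcal{G}\cong\bigcap_i\operatorname{Aut}\mathcal{G}_i$). *)

From mathcomp Require Import all_boot all_fingroup.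
Set Implicit Arguments. Unset Strict Implicit. Unset Printing Implicit Defensive.

Definition digraph_aut (T : finType) (E : rel T) : {set {perm T}} :=
  [set s : {perm T} | [forall x, forall y, E (s x) (s y) == E x y]].

Definition loopless (T : finType) (E : rel T) : Prop := forall x, ~~ E x x.

Definition regular_digraph (T : finType) (E : rel T) : Prop :=
  exists d : nat, forall v : T,
    #|[set u | E u v]| = d /\ #|[set u | E v u]| = d.

From HB Require Import structures.
From mathcomp Require Import all_boot all_fingroup.
Set Implicit Arguments. Unset Strict Implicit. Unset Printing Implicit Defensive.

(* The intersection H of the automorphism groups of G_1, ..., G_n is the full
   automorphism group of a single "gadget" digraph: keep the N original
   vertices as points, add a vertex (x, y) for every ordered pair of points,
   joined by x -> (x, y) -> y, and add n + 1 hubs 0, ..., n forming a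
   transitive tournament with loops, so that the hubs have pairwise distinct
   out-degrees and are fixed by every automorphism.  The pair (x, y) has an
   arc to hub 0 always and to hub i exactly when x -> y in G_i.  Loops single
   out the hubs, the arc to hub 0 tells pairs from points, so an automorphism
   permutes the points, acts on pairs accordingly, and preserves every G_i. *)

Lemma digraph_autP (V : finType) (E : rel V) (s : {perm V}) :
  reflect (forall x y, E (s x) (s y) = E x y) (s \in digraph_aut E).
Proof.
rewrite inE; apply: (iffP forallP) => [sE x y | sE x].
  by have /forallP/(_ y)/eqP := sE x.
by apply/forallP => y; rewrite sE.
Qed.

Lemma digraph_aut_outdeg (V : finType) (E : rel V) (s : {perm V}) (v : V) :
  s \in digraph_aut E -> #|[set u | E (s v) u]| = #|[set u | E v u]|.
Proof.
move=> /digraph_autP sE.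
have ->: [set u | E (s v) u] = s @: [set u | E v u].
  apply/setP => u; rewrite inE; apply/idP/imsetP => [Esvu | [w]].
    by exists (s^-1 u)%g; rewrite ?inE ?permKV // -sE permKV.
  by rewrite inE => Evw ->; rewrite sE.
exact: card_imset (@perm_inj _ s).
Qed.

Definition realizes_aut (T V : finType) (H : {set {perm T}}) (E : rel V)
    (iota : T -> V) (f : {perm T} -> {perm V}) : Prop :=
  [/\ injective iota,
      {in H &, forall s t, f (s * t)%g = (f s * f t)%g},
      {in H, forall s x, f s (iota x) = iota (s x)} &
      f @: H = digraph_aut E].

Section Relabel.
Variable V : finType.
Local Notation M := #|V|.

Definition relabel_rel (E : rel V) : rel 'I_M :=
  fun a b => E (enum_val a) (enum_val b).

Lemma relabel_perm_subproof (p : {perm V}) :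
  injective (fun a : 'I_M => enum_rank (p (enum_val a))).
Proof. by move=> a b /enum_rank_inj/perm_inj/enum_val_inj. Qed.

Definition relabel_perm (p : {perm V}) : {perm 'I_M} :=
  perm (@relabel_perm_subproof p).

Lemma unrelabel_perm_subproof (q : {perm 'I_M}) :
  injective (fun x : V => enum_val (q (enum_rank x))).
Proof. by move=> x y /enum_val_inj/perm_inj/enum_rank_inj. Qed.

Definition unrelabel_perm (q : {perm 'I_M}) : {perm V} :=
  perm (@unrelabel_perm_subproof q).

Lemma relabel_permK : cancel relabel_perm unrelabel_perm.
Proof. by move=> p; apply/permP => x; rewrite !permE /= !enum_rankK. Qed.

Lemma unrelabel_permK : cancel unrelabel_perm relabel_perm.
Proof. by move=> q; apply/permP => a; rewrite !permE /= !enum_valK. Qed.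

Lemma relabel_permM (p q : {perm V}) :
  relabel_perm (p * q)%g = (relabel_perm p * relabel_perm q)%g.
Proof. by apply/permP => a; rewrite permM !permE /= enum_rankK. Qed.

Lemma relabel_perm_aut (E : rel V) :
  relabel_perm @: digraph_aut E = digraph_aut (relabel_rel E).
Proof.
rewrite (can2_imset_pre _ relabel_permK unrelabel_permK).
apply/setP => q; rewrite inE; apply/digraph_autP/digraph_autP => qE.
  move=> a b; have := qE (enum_val a) (enum_val b).
  by rewrite !permE /= !enum_valK.
move=> x y; have := qE (enum_rank x) (enum_rank y).
by rewrite /relabel_rel !permE !enum_rankK.
Qed.

Lemma realizes_aut_relabel (T : finType) (H : {set {perm T}}) (E : rel V)
    (iota : T -> V) (f : {perm T} -> {perm V}) :
  realizes_aut H E iota f ->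
  realizes_aut H (relabel_rel E) (enum_rank \o iota) (relabel_perm \o f).
Proof.
case=> iota_inj fM f_iota fH; split.
- by move=> x y /enum_rank_inj/iota_inj.
- by move=> s t sH tH /=; rewrite fM // relabel_permM.
- by move=> s sH x /=; rewrite permE /= enum_rankK f_iota.
- by rewrite imset_comp fH relabel_perm_aut.
Qed.

End Relabel.

Section Gadget.
Variables (n : nat) (T : finType) (G : 'I_n -> rel T).

Inductive gadget := Hub of 'I_n.+1 | Point of T | Pair of T & T.

Definition gadget_to_sum (v : gadget) : 'I_n.+1 + T + T * T :=
  match v with
  | Hub a => inl (inl a)
  | Point x => inl (inr x)
  | Pair x y => inr (x, y)
  end.

Definition gadget_of_sum (w : 'I_n.+1 + T + T * T) : gadget :=
  match w with
  | inl (inl a) => Hub a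
  | inl (inr x) => Point x
  | inr (x, y) => Pair x y
  end.

Lemma gadget_to_sumK : cancel gadget_to_sum gadget_of_sum. Proof. by case. Qed.

HB.instance Definition _ := Finite.copy gadget (can_type gadget_to_sumK).

Definition gadget_rel (u v : gadget) : bool :=
  match u, v with
  | Hub a, Hub b => a <= b
  | Point x, Pair x' _ => x == x'
  | Pair _ y, Point y' => y == y'
  | Pair x y, Hub a => if unlift ord0 a is Some i then G i x y else true
  | _, _ => false
  end.

Definition is_hub (v : gadget) : bool := if v is Hub _ then true else false.

Lemma gadget_rel_loop (v : gadget) : gadget_rel v v = is_hub v.
Proof. by case: v => //= a; rewrite leqnn. Qed.

Lemma hub_outdeg_ltn (a b : 'I_n.+1) : a < b ->
  #|[set u | gadget_rel (Hub b) u]| < #|[set u | gadget_rel (Hub a) u]|.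
Proof.
move=> ltab; apply/proper_card/properP; split.
  by apply/subsetP => -[c|x|x y]; rewrite !inE //=; apply: leq_trans (ltnW ltab).
by exists (Hub a); rewrite !inE /= ?leqnn // leqNgt ltab.
Qed.

Definition gadget_lift (s : {perm T}) (v : gadget) : gadget :=
  match v with
  | Hub a => Hub a
  | Point x => Point (s x)
  | Pair x y => Pair (s x) (s y)
  end.

Lemma gadget_lift_inj (s : {perm T}) : injective (gadget_lift s).
Proof.
move=> [a|x|x y] [b|z|z w] //= [].
- by move=> /perm_inj->.
- by move=> /perm_inj-> /perm_inj->.
Qed.

Definition gadget_perm (s : {perm T}) : {perm gadget} := perm (@gadget_lift_inj s).

Lemma gadget_permM (s t : {perm T}) :
  gadget_perm (s * t)%g = (gadget_perm s * gadget_perm t)%g.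
Proof. by apply/permP => -[a|x|x y]; rewrite permM !permE /= ?permM. Qed.

Local Notation H := (\bigcap_(i < n) digraph_aut (G i)).

Lemma gadget_perm_aut (s : {perm T}) :
  s \in H -> gadget_perm s \in digraph_aut gadget_rel.
Proof.
move=> /bigcapP sG; apply/digraph_autP => u v; rewrite !permE.
case: u v => [a|x|x y] [b|z|z w] //=; rewrite ?(inj_eq perm_inj) //.
by case: (unlift ord0 b) => // i; have /digraph_autP-> := sG i isT.
Qed.

Section Restriction.
Variable sg : {perm gadget}.
Hypothesis sg_aut : sg \in digraph_aut gadget_rel.

Let aut_relE : forall u v, gadget_rel (sg u) (sg v) = gadget_rel u v.
Proof. exact/digraph_autP. Qed.

Lemma aut_is_hub (v : gadget) : is_hub (sg v) = is_hub v.
Proof. by rewrite -!gadget_rel_loop aut_relE. Qed.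

Lemma aut_fix_hub (a : 'I_n.+1) : sg (Hub a) = Hub a.
Proof.
case sga: (sg (Hub a)) (aut_is_hub (Hub a)) => [b|y|y z] //= _.
have := digraph_aut_outdeg (Hub a) sg_aut; rewrite sga.
case: (ltngtP a b) => [ltab|ltba|/val_inj-> //] deg_ab.
  by have := hub_outdeg_ltn ltab; rewrite deg_ab ltnn.
by have := hub_outdeg_ltn ltba; rewrite deg_ab ltnn.
Qed.

Definition point_restr (x : T) : T := if sg (Point x) is Point y then y else x.

(* Points are the loopless vertices without an arc to hub 0. *)
Lemma aut_point (x : T) : sg (Point x) = Point (point_restr x).
Proof.
rewrite /point_restr.
case sgx: (sg (Point x)) (aut_is_hub (Point x)) => [a|y|y z] //= _.
by have := aut_relE (Point x) (Hub ord0); rewrite sgx aut_fix_hub /= unlift_none.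
Qed.

Lemma point_restr_inj : injective point_restr.
Proof.
move=> x y exy.
by have /perm_inj[] : sg (Point x) = sg (Point y) by rewrite !aut_point exy.
Qed.

Definition restr_perm : {perm T} := perm point_restr_inj.

(* The pair (x, y) is the only vertex with arcs from x and to y. *)
Lemma aut_pair (x y : T) : sg (Pair x y) = Pair (restr_perm x) (restr_perm y).
Proof.
case sgp: (sg (Pair x y)) (aut_is_hub (Pair x y)) => [a|z|z w] //= _.
  by have := aut_relE (Pair x y) (Hub ord0); rewrite sgp aut_fix_hub /= unlift_none.
have := aut_relE (Point x) (Pair x y); rewrite sgp aut_point /= eqxx => /eqP<-.
have := aut_relE (Pair x y) (Point y); rewrite sgp aut_point /= eqxx => /eqP->.
by rewrite !permE.
Qed.

Lemma restr_perm_aut : restr_perm \in H.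
Proof.
apply/bigcapP => i _; apply/digraph_autP => x y.
have := aut_relE (Pair x y) (Hub (lift ord0 i)).
by rewrite aut_pair aut_fix_hub /= liftK.
Qed.

Lemma gadget_perm_restr : gadget_perm restr_perm = sg.
Proof.
apply/permP => -[a|x|x y]; rewrite permE /= ?aut_fix_hub ?aut_pair //.
by rewrite aut_point permE.
Qed.

End Restriction.

Lemma gadget_perm_image : gadget_perm @: H = digraph_aut gadget_rel.
Proof.
apply/setP => sg; apply/imsetP/idP => [[s sH ->] | sg_aut].
  exact: gadget_perm_aut.
by exists (restr_perm sg_aut); [exact: restr_perm_aut | rewrite gadget_perm_restr].
Qed.

Lemma gadget_realizes_aut : realizes_aut H gadget_rel Point gadget_perm.
Proof.
split; first by move=> x y [].
- by move=> s t _ _; rewrite gadget_permM.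
- by move=> s _ x; rewrite permE.
- exact: gadget_perm_image.
Qed.

End Gadget.

Theorem proposition5p1 (N n : nat) (G : 'I_n -> rel 'I_N) :
  (forall i, regular_digraph (G i) /\ loopless (G i)) ->
  exists (M : nat) (E : rel 'I_M) (iota : 'I_N -> 'I_M)
         (f : {perm 'I_N} -> {perm 'I_M}),
    [/\ injective iota,
        {in (\bigcap_(i < n) digraph_aut (G i)) &,
           forall s t, f (s * t)%g = (f s * f t)%g},
        {in (\bigcap_(i < n) digraph_aut (G i)),
           forall s x, f s (iota x) = iota (s x)} &
        f @: (\bigcap_(i < n) digraph_aut (G i)) = digraph_aut E].
Proof.
move=> _; do 4 eexists.
exact: realizes_aut_relabel (gadget_realizes_aut G).
Qed.
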